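(* Let $K$ be a good cubical $n$-complex and let $\xi\in K^{[n-2]}$ be an $(n-2)$-cube. Then the adjacency graph $\Gamma(\mathrm{St}_K(\xi))$ of the star of $\xi$ is cyclic, i.e. isomorphic either to the path graph $(\{1,\ldots,m\},\{\{1,2\},\ldots,\{m-1,m\}\})$ or to the cycle graph $(\{1,\ldots,m\},\{\{1,2\},\ldots,\{m-1,m\},\{m,1\}\})$ for some $m\ge1$.
   Context: A cubical $n$-complex is a collection of closed cells (''cubes''), closed under pairwise intersection, in which each $n$-cell $Q$ carries a homeomorphism $\phi_Q\colon Q\to[0,1]^n$ such that the cells contained in $Q$ are the preimages of the products of $\{0\},\{1\},[0,1]$, the structures agree on intersections via Euclidean isometries, and every cell lies in an $n$-cell; $K^{[k]}$ is the set of $k$-cubes. Two $n$-cubes are adjacent if they share a common $(n-1)$-cube face; the adjacency graph $\Gamma(P)$ has the $n$-cubes of $P$ as vertices and adjacent pairs as edges; $P$ is adjacently-connected if $\Gamma(P)$ is connected. For a subset $S$ of $K$, $\mathrm{Span}_K(S)$ is the smallest subcomplex containing $S$; the star of a cube $q$ is $\mathrm{St}_K(q)=\mathrm{Span}_K(\{Q\in K: q\subset Q\})$. An $(n-1)$-cube is one-sided if it is a face of exactly one $n$-cube, and $\partial K$ is the subcomplex spanned by one-sided $(n-1)$-cubes. $K$ is a good complex if: (1) $\Gamma(K)$ is connected; (2) each $(n-1)$-cube is a face of at most two $n$-cubes; (3) the star of each vertex and of each $(n-2)$-cube is an adjacently-connected cubical $n$-complex; (4) $\partial K$ is a cubical $(n-1)$-complex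 with at least one component, and each component of $\partial K$ is adjacently-connected. *)

From HB Require Import structures.
From mathcomp Require Import all_boot all_order all_algebra.
From mathcomp Require Import all_classical all_reals topology normedtype Rstruct Rstruct_topology.
From Stdlib Require Import Relations.

Set Implicit Arguments.
Unset Strict Implicit.
Unset Printing Implicit Defensive.

Import Order.TTheory GRing.Theory Num.Theory.
Local Open Scope classical_set_scope.
Local Open Scope ring_scope.

Notation Rr := Rdefinitions.R.

(* A face of [0,1]^n is a product of factors {0}, {1}, [0,1]; we code it by  *)
(* f : 'I_n -> option bool  (None = [0,1], Some false = {0}, Some true = {1}). *)
Definition cface (n : nat) := 'I_n -> option bool.

Definition face_set (n : nat) (f : cface n) : set 'rV[Rr]_n :=
  [set x | forall i : 'I_n, match f i with
                            | None => 0 <= x ord0 i <= 1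
                            | Some b => x ord0 i = (if b then 1 else 0)
                            end].

Definition unit_cube (n : nat) : set 'rV[Rr]_n := face_set (fun _ => None).

Definition face_dim (n : nat) (f : cface n) : nat := #|[pred i | f i == None]|.

Definition edist (n : nat) (x y : 'rV[Rr]_n) : Rr :=
  Num.sqrt (\sum_(i < n) (x ord0 i - y ord0 i) ^+ 2).

(* Data: a space X, the collection K of cells, the collection T of n-cells   *)
(* and the structure maps phi Q : X -> R^n (meaningful on Q for Q in T).     *)
Definition cubical_complex (n : nat) (X : topologicalType)
    (K T : set (set X)) (phi : set X -> X -> 'rV[Rr]_n) : Prop :=
  T `<=` K /\
  [/\
      (forall c1 c2, K c1 -> K c2 -> c1 `&` c2 = set0 \/ K (c1 `&` c2)),
      (forall Q, T Q -> exists psi : 'rV[Rr]_n -> X,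
          [/\ (forall x, Q x -> (@unit_cube n) (phi Q x)),
              (forall y, (@unit_cube n) y -> Q (psi y)),
              (forall x, Q x -> psi (phi Q x) = x),
              (forall y, (@unit_cube n) y -> phi Q (psi y) = y) &
              ({within Q, continuous (phi Q)} /\
               {within (@unit_cube n), continuous psi})]),
      (forall Q, T Q -> forall c, c `<=` Q ->
          (K c <-> exists f : cface n, c = Q `&` (phi Q @^-1` face_set f))),
      (forall Q1 Q2, T Q1 -> T Q2 -> exists A : 'rV[Rr]_n -> 'rV[Rr]_n,
          (forall x y, edist (A x) (A y) = edist x y) /\
          (forall x, (Q1 `&` Q2) x -> phi Q2 x = A (phi Q1 x))) &
      (forall c, K c -> exists Q, T Q /\ c `<=` Q)].

Definition cell_dim (n : nat) (X : topologicalType) (K T : set (set X))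
    (phi : set X -> X -> 'rV[Rr]_n) (c : set X) (k : nat) : Prop :=
  K c /\ exists Q (f : cface n),
    [/\ T Q, face_dim f = k & c = Q `&` (phi Q @^-1` face_set f)].

Definition adjacent (n : nat) (X : topologicalType) (K T : set (set X))
    (phi : set X -> X -> 'rV[Rr]_n) (d : nat) (Q1 Q2 : set X) : Prop :=
  [/\ T Q1, T Q2, Q1 <> Q2 &
      exists c, cell_dim K T phi c d.-1 /\ c `<=` Q1 `&` Q2].

Definition graph_connected (A : Type) (V : set A) (E : A -> A -> Prop) : Prop :=
  forall a b, V a -> V b -> clos_refl_trans A E a b.

(* Star of a cube q: the span of all cells containing q, i.e. all cells     *)
(* contained in some n-cell containing q; its n-cells are those containing q *)
Definition star_top (X : Type) (T : set (set X)) (q : set X) : set (set X) :=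
  [set Q | T Q /\ q `<=` Q].

Definition star_cells (X : Type) (K T : set (set X)) (q : set X) : set (set X) :=
  [set c | K c /\ exists Q, T Q /\ q `<=` Q /\ c `<=` Q].

Definition one_sided (n : nat) (X : topologicalType) (K T : set (set X))
    (phi : set X -> X -> 'rV[Rr]_n) (F : set X) : Prop :=
  cell_dim K T phi F n.-1 /\
  exists Q, [/\ T Q, F `<=` Q & forall Q', T Q' -> F `<=` Q' -> Q' = Q].

Definition bd_cells (n : nat) (X : topologicalType) (K T : set (set X))
    (phi : set X -> X -> 'rV[Rr]_n) : set (set X) :=
  [set c | K c /\ exists F, one_sided K T phi F /\ c `<=` F].

Definition good_complex (n : nat) (X : topologicalType) (K T : set (set X))
    (phi : set X -> X -> 'rV[Rr]_n) : Prop :=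
  [/\ cubical_complex K T phi,
      graph_connected T (adjacent K T phi n),
      (forall c Q1 Q2 Q3, cell_dim K T phi c n.-1 ->
          T Q1 -> T Q2 -> T Q3 -> c `<=` Q1 -> c `<=` Q2 -> c `<=` Q3 ->
          [\/ Q1 = Q2, Q1 = Q3 | Q2 = Q3]),
      (forall q, cell_dim K T phi q 0 \/ cell_dim K T phi q (n - 2) ->
          cubical_complex (star_cells K T q) (star_top T q) phi /\
          graph_connected (star_top T q)
            (adjacent (star_cells K T q) (star_top T q) phi n)) &
      [/\ (exists psi : set X -> X -> 'rV[Rr]_n.-1,
             cubical_complex (bd_cells K T phi) (one_sided K T phi) psi),
          (exists F, one_sided K T phi F) &
          (* two top cells of the boundary lying in the same component       *)
          (* (chain of pairwise intersecting top cells) are joined by a path  *)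
          (* of adjacent top cells of the boundary                            *)
          (forall F1 F2, clos_refl_trans (set X)
                (fun A B => [/\ one_sided K T phi A, one_sided K T phi B &
                                A `&` B !=set0]) F1 F2 ->
             one_sided K T phi F1 -> one_sided K T phi F2 ->
             clos_refl_trans (set X)
               (fun A B => [/\ one_sided K T phi A, one_sided K T phi B, A <> B &
                   exists c, cell_dim K T phi c (n - 2) /\ c `<=` A `&` B])
               F1 F2)]].

Definition path_edge (m : nat) (i j : 'I_m) : bool :=
  (i.+1 == j :> nat)%N || (j.+1 == i :> nat)%N.

Definition cycle_edge (m : nat) (i j : 'I_m) : bool :=
  (i != j) && (((i.+1 %% m)%N == j :> nat) || ((j.+1 %% m)%N == i :> nat)).

Definition graph_iso_ord (A : Type) (V : set A) (E : A -> A -> Prop)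
    (m : nat) (F : 'I_m -> 'I_m -> bool) : Prop :=
  exists g : 'I_m -> A,
    [/\ injective g, (forall i, V (g i)), (forall a, V a -> exists i, g i = a) &
        (forall i j, E (g i) (g j) <-> F i j)].

Definition cyclic_graph (A : Type) (V : set A) (E : A -> A -> Prop) : Prop :=
  exists m : nat, (1 <= m)%N /\
    (graph_iso_ord V E (@path_edge m) \/ graph_iso_ord V E (@cycle_edge m)).

From Pilot Require Import Defs.
From mathcomp Require Import all_boot all_order all_algebra.
From mathcomp Require Import all_classical all_reals topology normedtype Rstruct Rstruct_topology.
From mathcomp Require Import lra zify.
From Stdlib Require Import Relations.

Set Implicit Arguments.
Unset Strict Implicit.
Unset Printing Implicit Defensive.

Import Order.TTheory GRing.Theory Num.Theory.
Local Open Scope classical_set_scope.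

(* In an n-cube Q of the star of the (n-2)-cube xi, xi is the face with two fixed coordinates.
   An n-cube adjacent to Q meets it in a facet containing xi, i.e. in one of the two facets
   fixing one of these coordinates, and an (n-1)-cube lies in at most two n-cubes: so Q has at
   most two neighbours. The star is finite and adjacently connected, and a finite connected graph
   of maximum degree two is a path or a cycle, because a longest simple path is closed under
   adjacency and its only possible chord joins its two ends. *)

Lemma cycle_edgeE m (i j : 'I_m.+1) : 1 < m ->
  cycle_edge i j = [|| j == i.+1 :> nat, i == j.+1 :> nat |
                     (i == 0 :> nat) && (j == m :> nat) || (j == 0 :> nat) && (i == m :> nat)].
Proof.
move=> m_gt1; rewrite /cycle_edge -val_eqE /=.
have succ_mod (a b : 'I_m.+1) :
    (a.+1 %% m.+1 == b :> nat) = (a.+1 == b :> nat) || (a == m :> nat) && (b == 0 :> nat).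
  have lt_am := ltn_ord a; have lt_bm := ltn_ord b.
  have [->|ne_am] := eqVneq (a : nat) m; [rewrite modnn | rewrite modn_small]; lia.
by rewrite !succ_mod; lia.
Qed.

Section DegreeTwoGraph.
Variables (T : finType) (e : rel T).
Hypotheses (e_sym : ssrbool.symmetric e) (e_irr : ssrbool.irreflexive e).
Hypothesis e_deg2 : forall x a b c, e x a -> e x b -> e x c -> [|| a == b, a == c | b == c].

Definition spath x s := uniq (x :: s) && path e x s.

Lemma spath_size x s : spath x s -> size s < #|T|.
Proof.
case/andP=> uniq_xs _.
by rewrite -ltnS -[(size s).+1]/(size (x :: s)) -(card_uniqP uniq_xs) ltnS max_card.
Qed.

Lemma longest_spath (x0 : T) :
  exists x s, spath x s /\ forall y t, spath y t -> size t <= size s.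
Proof.
pose P k := `[< exists x s, spath x s /\ size s = k >].
have P0 : exists k, P k by exists 0; apply/asboolP; exists x0, [::].
have P_bounded k : P k -> k <= #|T|.
  by move=> /asboolP [x [s [/spath_size lt_sT <-]]]; apply: ltnW.
have [k /asboolP [x [s [xs_spath <-]]] k_max] := ex_maxnP P0 P_bounded.
by exists x, s; split=> // y t yt_spath; apply: k_max; apply/asboolP; exists y, t.
Qed.

Section LongestPath.
Variables (x : T) (s : seq T).
Hypothesis s_spath : spath x s.
Hypothesis s_longest : forall y t, spath y t -> size t <= size s.
Local Notation p := (x :: s).
Local Notation k := (size s).
Local Notation v i := (nth x p i).

Let p_uniq : uniq p. Proof. by case/andP: s_spath. Qed.
Let p_path : path e x s. Proof. by case/andP: s_spath. Qed.

Lemma longest_edge i : i < k -> e (v i) (v i.+1).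
Proof. by move=> ik; apply: (pathP x p_path). Qed.

Lemma longest_nth_eq i j : i <= k -> j <= k -> (v i == v j) = (i == j).
Proof. by move=> ik jk; rewrite nth_uniq. Qed.

Lemma longest_head_nbr w : e x w -> w \in p.
Proof.
move=> xw; apply: contraT => w_notin_p.
have : spath w p by rewrite /spath cons_uniq w_notin_p p_uniq /= e_sym xw.
by move/s_longest; rewrite ltnn.
Qed.

Lemma longest_last_nbr w : e (last x s) w -> w \in p.
Proof.
move=> lw; apply: contraT => w_notin_p.
have : spath x (rcons s w).
  by rewrite /spath -rcons_cons rcons_uniq w_notin_p p_uniq rcons_path p_path.
by move/s_longest; rewrite size_rcons ltnn.
Qed.

Lemma longest_inner_nbr i a : 0 < i < k -> e (v i) a -> (a == v i.-1) || (a == v i.+1).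
Proof.
case/andP=> i_gt0 ik ia.
have prev : e (v i) (v i.-1) by rewrite e_sym -{2}(prednK i_gt0) longest_edge //; lia.
have := e_deg2 prev (longest_edge ik) ia.
rewrite longest_nth_eq ?[_ == a]eq_sym; [|lia..].
by have -> : (i.-1 == i.+1) = false by lia.
Qed.

Lemma longest_closed u w : u \in p -> e u w -> w \in p.
Proof.
move=> up; rewrite -(nth_index x up).
have : index u p < k.+1 by rewrite -[k.+1]/(size p) index_mem.
case: (index u p) => [|i] lt_ik.
  exact: longest_head_nbr.
have [ik uw|] := ltnP i.+1 k.
  case/orP: (longest_inner_nbr (i := i.+1) (ltac:(lia)) uw) => /eqP ->;
  by apply: mem_nth => /=; lia.
move=> ki; have -> : i.+1 = k by lia.
by rewrite -last_nth => /longest_last_nbr.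
Qed.

Lemma longest_mem (conn : forall y z, connect e y z) y : y \in p.
Proof.
have p_closed : fingraph.closed e (mem p).
  exact: intro_closed (sym_connect_sym e_sym) _ (fun u w uw up => longest_closed up uw).
by rewrite -(closed_connect p_closed (conn x y)) mem_head.
Qed.

Lemma longest_chord i j : i.+1 < j <= k -> e (v i) (v j) -> (i == 0) && (j == k).
Proof.
case/andP=> lt_ij jk ij.
have [lt_jk|] := ltnP j k.
  have := longest_inner_nbr (i := j) (ltac:(lia)) (a := v i); rewrite e_sym => /(_ ij).
  by rewrite !longest_nth_eq; lia.
move=> le_kj; have [|i_gt0] := posnP i; first by lia.
have := longest_inner_nbr (i := i) (ltac:(lia)) ij.
by rewrite ![v j == _]longest_nth_eq; lia.
Qed.

Lemma longest_edge_lt i j : i < j <= k ->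
  e (v i) (v j) = (j == i.+1) || [&& i == 0, j == k & e x (last x s)].
Proof.
move=> ijk; have [->|ne_ji] := eqVneq j i.+1; first by rewrite longest_edge //; lia.
apply/idP/idP => [ij | /and3P[/eqP -> /eqP ->]]; last by rewrite (last_nth x).
have /andP[/eqP i0 /eqP jk] := longest_chord (i := i) (j := j) (ltac:(lia)) ij.
by move: ij; rewrite i0 jk -(last_nth x) => ->; rewrite !eqxx.
Qed.

Lemma longest_closing_size : e x (last x s) -> 0 < k.
Proof.
by move=> closing; rewrite lt0n size_eq0; apply: contraTneq closing => ->; rewrite e_irr.
Qed.

Lemma longest_edgeE i j : i <= k -> j <= k ->
  e (v i) (v j) = [|| j == i.+1, i == j.+1 |
                      e x (last x s) && ((i == 0) && (j == k) || (j == 0) && (i == k))].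
Proof.
move=> ik jk; have := @longest_closing_size.
case: (ltngtP i j) => [lt_ij | lt_ji | <-].
- by rewrite longest_edge_lt; [case: (e x _) => /=; lia | lia].
- by rewrite [e (v i) _]e_sym longest_edge_lt; [case: (e x _) => /=; lia | lia].
- by rewrite e_irr; case: (e x _) => /=; lia.
Qed.

Lemma longest_edge_path i j : ~~ (e x (last x s) && (1 < k)) -> i <= k -> j <= k ->
  e (v i) (v j) = (i.+1 == j) || (j.+1 == i).
Proof.
move=> no_cycle ik jk; rewrite longest_edgeE //.
by move: no_cycle (@longest_closing_size); case: (e x _) => /=; lia.
Qed.

End LongestPath.

Lemma connected_deg2_cyclic (x0 : T) : (forall y z, connect e y z) ->
  cyclic_graph [set: T] (fun y z => e y z).
Proof.
move=> conn; have [x [s [xs_spath xs_longest]]] := longest_spath x0.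
pose v (i : 'I_(size s).+1) := nth x (x :: s) i.
have iso F : (forall i j, e (v i) (v j) = F i j) -> graph_iso_ord [set: T] (fun y z => e y z) F.
  move=> eF; exists v; split=> // [i j /eqP | y _ | i j]; last by rewrite eF.
  - by rewrite (longest_nth_eq xs_spath (ltn_ord i) (ltn_ord j)) => /eqP /val_inj.
  - have lt_y : index y (x :: s) < size (x :: s).
      by rewrite index_mem longest_mem.
    by exists (Ordinal lt_y); rewrite /v nth_index ?longest_mem.
exists (size s).+1; split=> //.
case: (boolP (e x (last x s) && (1 < size s))) => [/andP[closing k_gt1] | no_cycle].
  right; apply: iso => i j; rewrite cycle_edgeE //.
  by rewrite /v (longest_edgeE xs_spath (ltn_ord i) (ltn_ord j)) closing.
left; apply: iso => i j.
by rewrite /v (longest_edge_path xs_spath no_cycle (ltn_ord i) (ltn_ord j)).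
Qed.

End DegreeTwoGraph.

Lemma cyclic_graph_of_iso (A : Type) (V : set A) (E : A -> A -> Prop)
    (T : finType) (e : rel T) (h : T -> A) :
  injective h -> (forall t, V (h t)) -> (forall a, V a -> exists t, h t = a) ->
  (forall t u, E (h t) (h u) <-> e t u) ->
  cyclic_graph [set: T] (fun t u => e t u) -> cyclic_graph V E.
Proof.
move=> h_inj hV h_onto hE [m [m_gt0 iso_e]]; exists m; split=> //.
have iso_E F : graph_iso_ord [set: T] (fun t u => e t u) F -> graph_iso_ord V E F.
  case=> g [g_inj _ g_onto gF]; exists (h \o g); split=> [i j /h_inj/g_inj // | i | a | i j].
  - exact: hV.
  - by move=> /h_onto [t <-]; have [i <-] := g_onto t I; exists i.
  - by rewrite /= hE gF.
by case: iso_e => /iso_E; [left | right].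
Qed.

Lemma finite_deg2_connected_cyclic (A : eqType) (V : set A) (E : A -> A -> Prop) :
  finite_set V -> V !=set0 ->
  (forall a b, E a b -> E b a) -> (forall a b, E a b -> V b) -> (forall a, ~ E a a) ->
  (forall a b c d, E a b -> E a c -> E a d -> [\/ b = c, b = d | c = d]) ->
  graph_connected V E -> cyclic_graph V E.
Proof.
move=> /finite_seqP [s Vs] [a0 Va0] E_sym E_V E_irr E_deg2 E_conn.
have VL a : V a <-> a \in undup s by rewrite mem_undup Vs.
pose h (i : 'I_(size (undup s))) := nth a0 (undup s) i.
have hV i : V (h i) by apply/VL; apply: mem_nth.
have h_inj : injective h.
  by move=> i j /eqP; rewrite nth_uniq ?undup_uniq // => /eqP /val_inj.
have h_onto a : V a -> exists i, h i = a.
  move=> /VL a_in; have lt_a : index a (undup s) < size (undup s) by rewrite index_mem.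
  by exists (Ordinal lt_a); rewrite /h nth_index.
pose e : rel 'I_(size (undup s)) := fun i j => `[< E (h i) (h j) >].
apply: (@cyclic_graph_of_iso _ V E _ e h) => // [i j | ]; first by split=> /asboolP.
have [i0 _] := h_onto a0 Va0.
have reach a b : clos_refl_trans_1n A E a b ->
    forall i, h i = a -> exists2 j, h j = b & connect e i j.
  elim=> [a' | a' a1 b' Ea1 _ IH] i hi; first by exists i.
  have [j hj] := h_onto _ (E_V _ _ Ea1); have [k hk jk] := IH j hj.
  by exists k => //; apply: connect_trans jk; apply: connect1; apply/asboolP; rewrite hi hj.
apply: (connected_deg2_cyclic _ _ _ i0) => [i j | i | i a b c | i j].
- by apply/asboolP/asboolP => /E_sym.
- by apply/asboolP/E_irr.
- move=> /asboolP ea /asboolP eb /asboolP ec.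
  by case: (E_deg2 _ _ _ _ ea eb ec) => /h_inj ->; rewrite eqxx ?orbT.
- have /clos_rt_rt1n_iff /reach /(_ i erefl) [k /h_inj -> //] := E_conn _ _ (hV i) (hV j).
Qed.

Local Open Scope ring_scope.

Local Notation cell phi Q f := (Q `&` (phi Q @^-1` face_set f)).

Section CubeFaces.
Variable n : nat.
Implicit Types f g : cface n.

Definition fixed_coords f : {set 'I_n} := [set i | f i != None].

Definition facet f i : cface n := fun j => if j == i then f i else None.

Lemma face_dim_fixed f : (face_dim f + #|fixed_coords f|)%N = n.
Proof.
rewrite -[RHS](card_ord n) -(cardC [pred i | f i == None]) /face_dim.
by congr (_ + _)%N; apply: eq_card => i; rewrite !inE.
Qed.

Lemma fixed_facet f i : f i != None -> fixed_coords (facet f i) = [set i]%SET.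
Proof.
move=> fi; apply/setP => j; rewrite !inE /facet.
by case: (j == i); rewrite ?fi.
Qed.

Lemma face_dim_facet f i : f i != None -> face_dim (facet f i) = n.-1.
Proof. by move=> fi; have := face_dim_fixed (facet f i); rewrite fixed_facet // cards1; lia. Qed.

Lemma face_dim_full : face_dim (fun _ : 'I_n => None) = n.
Proof. by rewrite /face_dim -[RHS]card_ord; apply: eq_card. Qed.

Lemma face_set_full f : (n <= face_dim f)%N -> face_set f = @unit_cube n.
Proof.
move=> dim_f; have /cards0_eq fixed0 : #|fixed_coords f| = 0%N by have := face_dim_fixed f; lia.
suff -> : f = (fun _ => None) by [].
apply: funext => i; apply/eqP; apply: contraT => fi.
suff : i \in fixed_coords f by rewrite fixed0 inE.
by rewrite inE.
Qed.

Definition corner (b : bool) f : 'rV[Rr]_n :=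
  \row_i (if odflt b (f i) then 1 else 0).

Lemma corner_face b f : face_set f (corner b f).
Proof. by move=> i; rewrite mxE; case: (f i) => [c|] //=; case: b; rewrite ?lexx ?ler01. Qed.

Lemma face_set_cube f : face_set f `<=` @unit_cube n.
Proof. by move=> y fy i; have := fy i; case: (f i) => [[]|] // ->; rewrite ?lexx ?ler01. Qed.

Lemma face_set_sub_fixed f g :
  face_set f `<=` face_set g -> forall i, g i != None -> g i = f i.
Proof.
move=> fg i; have := fg _ (corner_face false f) i; have := fg _ (corner_face true f) i.
rewrite !mxE; case: (g i) => // c; case: (f i) => [c'|] /=.
  by case: c; case: c' => // /eqP; rewrite ?oner_eq0 // eq_sym oner_eq0.
by case: c => [_ /eqP | /eqP]; rewrite ?(eq_sym 0) oner_eq0.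
Qed.

Lemma fixed_coords_sub f g :
  face_set f `<=` face_set g -> fixed_coords g \subset fixed_coords f.
Proof.
by move=> fg; apply/fintype.subsetP => i; rewrite !inE => gi; rewrite -(face_set_sub_fixed fg gi).
Qed.

Lemma facet_of_fixed1 f g i :
  face_set f `<=` face_set g -> fixed_coords g = [set i]%SET -> g = facet f i.
Proof.
move=> fg fixed_gi; apply: funext => j; rewrite /facet; case: ifP => [/eqP -> | ne_ji].
  by apply: face_set_sub_fixed fg _ _; have := set11 i; rewrite -fixed_gi inE.
apply/eqP; apply: contraT => gj.
suff : j \in fixed_coords g by rewrite fixed_gi inE ne_ji.
by rewrite inE.
Qed.

Lemma edist_face_le f x y :
  face_set f x -> face_set f y -> Defs.edist x y <= Num.sqrt (face_dim f)%:R.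
Proof.
move=> fx fy; apply: ler_wsqrtr; rewrite (bigID (fun i => f i == None)) /=.
rewrite [X in _ + X]big1 ?addr0; last first.
  by move=> i; have := fx i; have := fy i; case: (f i) => // b -> -> _; rewrite subrr expr0n.
rewrite /face_dim -sum1_card natr_sum ler_sum // => i /eqP fi.
by have := fx i; have := fy i; rewrite fi => /andP[? ?] /andP[? ?]; nra.
Qed.

Lemma edist_corners f : Defs.edist (corner false f) (corner true f) = Num.sqrt (face_dim f)%:R.
Proof.
congr Num.sqrt; rewrite (bigID (fun i => f i == None)) /=.
rewrite [X in _ + X]big1 ?addr0; last first.
  by move=> i; rewrite !mxE; case: (f i) => // b _; rewrite subrr expr0n.
rewrite /face_dim -sum1_card natr_sum; apply: eq_bigr => i /eqP fi.
by rewrite !mxE fi sub0r sqrrN expr1n.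
Qed.

End CubeFaces.

Section CubicalComplex.
Variables (n : nat) (X : topologicalType) (K T : set (set X)).
Variable phi : set X -> X -> 'rV[Rr]_n.
Hypothesis CC : cubical_complex K T phi.


Lemma top_sub_cells : T `<=` K.
Proof. by case: CC. Qed.

Lemma cell_faceP Q c : T Q -> c `<=` Q -> K c <-> exists f, c = cell phi Q f.
Proof. by case: CC => _ [_ _ face_cells _ _] TQ cQ; apply: face_cells. Qed.

Lemma chart_cube Q x : T Q -> Q x -> unit_cube (phi Q x).
Proof.
by case: CC => _ [_ chart _ _ _] TQ; have [psi [in_cube _ _ _ _]] := chart Q TQ; apply: in_cube.
Qed.

Lemma cell_chart_onto Q f y : T Q -> face_set f y -> exists2 x, cell phi Q f x & phi Q x = y.
Proof.
case: CC => _ [_ chart _ _ _] TQ fy; have [psi [_ psiQ _ phiK _]] := chart Q TQ.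
have y_cube := face_set_cube fy.
by exists (psi y); [split; [exact: psiQ | rewrite /preimage /= phiK] | exact: phiK].
Qed.

Lemma cell_full Q : T Q -> cell phi Q (fun _ => None) = Q.
Proof. by move=> TQ; apply/seteqP; split=> [x [] | x Qx] //; split=> //; apply: chart_cube. Qed.

Lemma cell_sub_face Q f g : T Q -> cell phi Q f `<=` cell phi Q g -> face_set f `<=` face_set g.
Proof. by move=> TQ fg y /(cell_chart_onto TQ) [x /fg [_ gx] <-]. Qed.

Lemma cell_dim_nonempty c k : cell_dim K T phi c k -> c !=set0.
Proof.
case=> _ [Q [f [TQ _ ->]]]; have [x fx _] := cell_chart_onto TQ (corner_face false f).
by exists x.
Qed.

(* A face of [0,1]^n has diameter the square root of its dimension, and charts differ by
   isometries. *)
Lemma face_dim_le_cell Q1 Q2 c f1 f2 : T Q1 -> T Q2 ->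
  c = cell phi Q1 f1 -> c = cell phi Q2 f2 -> (face_dim f1 <= face_dim f2)%N.
Proof.
move=> TQ1 TQ2 -> c12; case: CC => _ [_ _ _ isometric _].
have [A [A_iso phiA]] := isometric Q1 Q2 TQ1 TQ2.
have in_Q2 z : cell phi Q1 f1 z -> (Q1 `&` Q2) z /\ face_set f2 (phi Q2 z).
  by move=> z1; have [Q1z _] := z1; rewrite c12 in z1; case: z1.
have [x /in_Q2 [x12 x2] phix] := cell_chart_onto TQ1 (corner_face false f1).
have [y /in_Q2 [y12 y2] phiy] := cell_chart_onto TQ1 (corner_face true f1).
have := edist_face_le x2 y2.
by rewrite (phiA x x12) (phiA y y12) A_iso phix phiy edist_corners ler_sqrt ?ler0n // ler_nat.
Qed.

Lemma face_dim_cell_dim c k Q f :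
  cell_dim K T phi c k -> T Q -> c = cell phi Q f -> face_dim f = k.
Proof.
case=> _ [Q' [f' [TQ' <- cQ']]] TQ cQ.
by apply/anti_leq; rewrite (face_dim_le_cell TQ TQ' cQ cQ') (face_dim_le_cell TQ' TQ cQ' cQ).
Qed.

Lemma cell_dim_cell Q f : T Q -> cell_dim K T phi (cell phi Q f) (face_dim f).
Proof.
move=> TQ; split; last by exists Q, f.
by apply/(cell_faceP TQ (fun x => @proj1 _ _ )); exists f.
Qed.

Lemma top_sub_eq Q Q' : T Q -> T Q' -> Q `<=` Q' -> Q = Q'.
Proof.
move=> TQ TQ' QQ'; have [g Qg] := (cell_faceP TQ' QQ').1 (top_sub_cells TQ).
have := face_dim_le_cell TQ TQ' (esym (cell_full TQ)) Qg; rewrite face_dim_full => dim_g.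
by rewrite Qg face_set_full // cell_full.
Qed.

Lemma top_meet_face Q Q' : T Q -> T Q' -> Q `&` Q' !=set0 -> exists g, Q `&` Q' = cell phi Q g.
Proof.
move=> TQ TQ' [x QQ'x]; apply/(cell_faceP TQ (fun _ => @proj1 _ _)).
case: CC => _ [meet_cells _ _ _ _].
have [QQ'0|//] := meet_cells Q Q' (top_sub_cells TQ) (top_sub_cells TQ').
by rewrite QQ'0 in QQ'x.
Qed.

Lemma top_meet_fixed_gt0 Q Q' g : T Q -> T Q' -> Q <> Q' ->
  Q `&` Q' = cell phi Q g -> (0 < #|fixed_coords g|)%N.
Proof.
move=> TQ TQ' neQ meet_g; rewrite lt0n; apply: contra_notN neQ => /eqP fixed0.
apply: (top_sub_eq TQ TQ') => x Qx.
have : cell phi Q g x.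
  by rewrite face_set_full ?(cell_full TQ) //; have := face_dim_fixed g; lia.
by rewrite -meet_g => -[].
Qed.

End CubicalComplex.

Lemma cell_dim_star n (X : topologicalType) (K T : set (set X))
    (phi : set X -> X -> 'rV[Rr]_n) q c k :
  cell_dim (star_cells K T q) (star_top T q) phi c k -> cell_dim K T phi c k.
Proof. by case=> [[Kc _] [Q [f [[TQ _] dim_f cQ]]]]; split=> //; exists Q, f. Qed.

Lemma star_top_nonempty n (X : topologicalType) (K T : set (set X))
    (phi : set X -> X -> 'rV[Rr]_n) q k :
  cell_dim K T phi q k -> star_top T q !=set0.
Proof. by case=> _ [Q [f [TQ _ ->]]]; exists Q; split=> // x []. Qed.

Lemma adjacent_sym n (X : topologicalType) (K T : set (set X))
    (phi : set X -> X -> 'rV[Rr]_n) d Q1 Q2 :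
  adjacent K T phi d Q1 Q2 -> adjacent K T phi d Q2 Q1.
Proof.
case=> TQ1 TQ2 ne [c [c_dim c12]]; split=> //; first exact: nesym.
by exists c; split=> // x /c12 [].
Qed.

Section Star.
Variables (n : nat) (X : topologicalType) (K T : set (set X)).
Variables (phi : set X -> X -> 'rV[Rr]_n) (xi : set X).
Hypothesis CC : cubical_complex K T phi.
Hypothesis facet_le2_tops : forall c Q1 Q2 Q3, cell_dim K T phi c n.-1 ->
  T Q1 -> T Q2 -> T Q3 -> c `<=` Q1 -> c `<=` Q2 -> c `<=` Q3 ->
  [\/ Q1 = Q2, Q1 = Q3 | Q2 = Q3].
Hypothesis n_ge2 : (2 <= n)%N.
Hypothesis xi_dim : cell_dim K T phi xi (n - 2).

Local Notation adj := (adjacent (star_cells K T xi) (star_top T xi) phi n).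

Lemma star_face Q : star_top T xi Q ->
  exists2 f, xi = cell phi Q f & (#|fixed_coords f| <= 2)%N.
Proof.
case=> TQ xiQ; have [f xif] := (cell_faceP CC TQ xiQ).1 xi_dim.1.
by exists f => //; have := face_dim_fixed f; rewrite (face_dim_cell_dim CC xi_dim TQ xif); lia.
Qed.

Lemma adjacent_meet_facet Q Q' f : star_top T xi Q -> xi = cell phi Q f -> adj Q Q' ->
  exists2 i, f i != None & Q `&` Q' = cell phi Q (facet f i).
Proof.
case=> TQ xiQ xif [_ [TQ' xiQ'] neQ [c [/cell_dim_star c_dim cQQ']]].
have xiQQ' : xi `<=` Q `&` Q' by move=> x xix; split; [apply: xiQ | apply: xiQ'].
have QQ'_ne : Q `&` Q' !=set0.
  by have [x xix] := cell_dim_nonempty CC xi_dim; exists x; apply: xiQQ'.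
have [g meet_g] := top_meet_face CC TQ TQ' QQ'_ne.
have [h ch] := (cell_faceP CC TQ (fun x cx => (cQQ' x cx).1)).1 c_dim.1.
have hg : face_set h `<=` face_set g by apply: (cell_sub_face CC TQ); rewrite -ch -meet_g.
have fg : face_set f `<=` face_set g by apply: (cell_sub_face CC TQ); rewrite -xif -meet_g.
have [i fixed_gi] : exists i, fixed_coords g = [set i]%SET.
  apply/cards1P; have := subset_leq_card (fixed_coords_sub hg).
  have := top_meet_fixed_gt0 CC TQ TQ' neQ meet_g; have := face_dim_fixed h.
  by rewrite (face_dim_cell_dim CC c_dim TQ ch); lia.
have g_facet := facet_of_fixed1 fg fixed_gi.
exists i; last by rewrite meet_g g_facet.
by have := set11 i; rewrite -fixed_gi g_facet inE /facet eqxx.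
Qed.

Lemma adjacent_facet_eq Q a b f i : star_top T xi Q -> adj Q a -> adj Q b ->
  f i != None -> Q `&` a = cell phi Q (facet f i) -> Q `&` b = cell phi Q (facet f i) -> a = b.
Proof.
case=> TQ _ [_ [Ta _] neQa _] [_ [Tb _] neQb _] fi Qa Qb.
have c_dim : cell_dim K T phi (Q `&` a) n.-1.
  by rewrite Qa -(face_dim_facet fi); apply: cell_dim_cell.
have sub_b : Q `&` a `<=` b by rewrite Qa -Qb => x [].
by case: (facet_le2_tops c_dim TQ Ta Tb (fun x => @proj1 _ _) (fun x => @proj2 _ _) sub_b).
Qed.

Lemma star_adjacent_deg2 Q a b c : adj Q a -> adj Q b -> adj Q c -> [\/ a = b, a = c | b = c].
Proof.
move=> Qa Qb Qc; have VQ : star_top T xi Q by case: Qa.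
have [f xif fixed_f_le2] := star_face VQ.
have [ia fia Qa_ia] := adjacent_meet_facet VQ xif Qa.
have [ib fib Qb_ib] := adjacent_meet_facet VQ xif Qb.
have [ic fic Qc_ic] := adjacent_meet_facet VQ xif Qc.
have [eq_ab|ne_ab] := eqVneq ia ib.
  by constructor 1; apply: (adjacent_facet_eq VQ Qa Qb fia) => //; rewrite eq_ab.
have [eq_ac|ne_ac] := eqVneq ia ic.
  by constructor 2; apply: (adjacent_facet_eq VQ Qa Qc fia) => //; rewrite eq_ac.
have [eq_bc|ne_bc] := eqVneq ib ic.
  by constructor 3; apply: (adjacent_facet_eq VQ Qb Qc fib) => //; rewrite eq_bc.
have : (#|[set ia; ib; ic]%SET| <= #|fixed_coords f|)%N.
  by apply: subset_leq_card; apply/fintype.subsetP => i; rewrite !inE => /orP[/orP[] | ] /eqP ->.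
rewrite finset.setUC cardsU1 cards2 !inE negb_or ![ic == _]eq_sym ne_ab ne_ac ne_bc.
by move=> /leq_trans /(_ fixed_f_le2).
Qed.

End Star.

Theorem lemma3p16 (n : nat) (X : topologicalType) (K T : set (set X))
    (phi : set X -> X -> 'rV[Rr]_n) (xi : set X) :
  (2 <= n)%N ->
  finite_set K ->
  good_complex K T phi ->
  cell_dim K T phi xi (n - 2) ->
  cyclic_graph (star_top T xi)
    (adjacent (star_cells K T xi) (star_top T xi) phi n).
Proof.
move=> n_ge2 finK [CC _ facet_le2_tops star_good _] xi_dim.
have [_ star_conn] := star_good xi (or_intror xi_dim).
apply: finite_deg2_connected_cyclic => //.
- by apply: sub_finite_set finK => Q [TQ _]; exact: (top_sub_cells CC).
- exact: star_top_nonempty xi_dim.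
- by move=> Q Q'; apply: adjacent_sym.
- by move=> Q Q' [].
- by move=> Q [_ _ []].
- by move=> Q a b c; apply: (star_adjacent_deg2 CC facet_le2_tops n_ge2 xi_dim).
Qed.
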